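(* Let $N\in\mathbb N$, $\nu>0$, and let $z_1^{(\nu-1)}>\dots>z_N^{(\nu-1)}>0$ be the zeros of the Laguerre polynomial $L_N^{(\nu-1)}$ (orthogonal with respect to $e^{-x}x^{\nu-1}$ on $]0,\infty[$). Let $r_i:=\sqrt{2z_i^{(\nu-1)}}$ and form $S=(s_{i,j})_{i,j=1,\dots,N}$ with $$s_{i,i}:=1+\frac{2\nu}{r_i^2}+2\sum_{l\ne i}(r_i-r_l)^{-2}+2\sum_{l\ne i}(r_i+r_l)^{-2},\qquad s_{i,j}:=2(r_i+r_j)^{-2}-2(r_i-r_j)^{-2}\ (i\ne j).$$ Then $\det S=N!\cdot 2^N$. *)

From mathcomp Require Import all_boot all_order all_algebra.
From mathcomp Require Import reals.
Set Implicit Arguments. Unset Strict Implicit. Unset Printing Implicit Defensive.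
Import Order.TTheory GRing.Theory Num.Theory.
Local Open Scope ring_scope.

(* Generalized Laguerre polynomial L_N^{(a)}(x)
   = sum_{k=0}^N (-1)^k binom(N+a, N-k) x^k / k!
   where binom(N+a, N-k) / k! = (prod_{j=k+1}^{N} (a + j)) / ((N-k)! k!). *)
Definition laguerre (R : fieldType) (a : R) (N : nat) : {poly R} :=
  \poly_(k < N.+1)
    ((-1) ^+ k / ((k`!)%:R * ((N - k)`!)%:R) *
     \prod_(k.+1 <= j < N.+1) (a + j%:R)).

Definition Smat (R : realType) (N : nat) (nu : R) (r : 'I_N -> R) : 'M[R]_N :=
  \matrix_(i, j)
    (if i == j then
       1 + 2 * nu / (r i ^+ 2)
         + 2 * \sum_(l < N | l != i) (r i - r l) ^- 2
         + 2 * \sum_(l < N | l != i) (r i + r l) ^- 2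
     else 2 * (r i + r j) ^- 2 - 2 * (r i - r j) ^- 2).

(* Let y_1, ..., y_N be the zeros and L f = x f'' + (nu - x) f' + N f the Laguerre
   operator, which annihilates L_N^(nu-1) and hence P = prod_l (X - y_l).  On polynomials
   of degree < N, L is triangular in the monomial basis with diagonal N, N-1, ..., 1, so
   its matrix A in the nodal basis (values at the y_i, with Lagrange polynomials
   Q_j = prod_(l <> j) (X - y_l)) has determinant N! as well.  Evaluating
   L ((X - y_j) Q_j) = 0 and its derivative at the zeros gives Stieltjes' relation
   2 y_i sum_(l <> i) 1 / (y_i - y_l) = y_i - nu and closed forms for the entries of A;
   since r_i^2 = 2 y_i they show S = 2 D^-1 A D with D = diag (r_i Q_i(y_i)). *)

From HB Require Import structures.
From mathcomp Require Import all_boot all_order all_algebra.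
From mathcomp Require Import reals.
From mathcomp Require Import ring.
Import Order.TTheory GRing.Theory Num.Theory.
Local Open Scope ring_scope.

Definition monomial_mx {R : nzRingType} (N : nat) (T : {poly R} -> {poly R}) : 'M[R]_N :=
  \matrix_(m, k) (T 'X^k)`_m.

Section LaguerreOperator.
Context {R : comNzRingType}.

Definition laguerre_op (nu : R) (N : nat) (f : {poly R}) : {poly R} :=
  'X * f^`()^`() + (nu%:P - 'X) * f^`() + N%:R%:P * f.

Variables (nu : R) (N : nat).

Fact laguerre_op_is_linear : linear (laguerre_op nu N).
Proof. by move=> a f g; rewrite /laguerre_op !derivE -!mul_polyC; ring. Qed.

HB.instance Definition _ :=
  GRing.isLinear.Build R {poly R} {poly R} *:%R (laguerre_op nu N) laguerre_op_is_linear.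

Lemma coef_laguerre_op f k : (laguerre_op nu N f)`_k =
  f`_k.+1 * (k.+1%:R * (k%:R + nu)) + f`_k * (N%:R - k%:R).
Proof.
rewrite /laguerre_op mulrBl !coefD coefN !coefXM !coefCM !coef_deriv.
by case: k => [|k] /=; rewrite ?mulr1n; ring.
Qed.

Lemma laguerre_op_mulXsubC c f : laguerre_op nu N (('X - c%:P) * f) =
  ('X - c%:P) * laguerre_op nu N f + 'X *+ 2 * f^`() + (nu%:P - 'X) * f.
Proof. by rewrite /laguerre_op !derivE; ring. Qed.

Lemma size_laguerre_op (f : {poly R}) n : (size f <= n)%N -> (size (laguerre_op nu N f) <= n)%N.
Proof.
move=> hf; apply/leq_sizeP => j hj.
by rewrite coef_laguerre_op !nth_default ?mul0r ?addr0 // (leq_trans hf) ?leqW.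
Qed.

Lemma prod_natr_sub n : \prod_(k < n) (n%:R - k%:R) = n`!%:R :> R.
Proof.
elim: n => [|n IH]; first by rewrite big_ord0.
rewrite big_ord_recl subr0 factS natrM -IH; congr (_ * _).
by apply: eq_bigr => k _; rewrite lift0 -!natr1; ring.
Qed.

Lemma det_monomial_mx_laguerre_op : \det (monomial_mx N (laguerre_op nu N)) = N`!%:R.
Proof.
rewrite -det_tr det_trig.
  rewrite -prod_natr_sub; apply: eq_bigr => k _.
  by rewrite !mxE coef_laguerre_op !coefXn eqxx eqn_leq ltnn mul0r add0r mul1r.
apply/is_trig_mxP => k m hkm; rewrite !mxE coef_laguerre_op !coefXn.
by rewrite (gtn_eqF hkm) gtn_eqF ?mul0r ?addr0 // ltnS ltnW.
Qed.

End LaguerreOperator.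

Section DerivProdXsubC.
Context {F : fieldType} {I : Type} (P : pred I) (a : I -> F) (x : F).
Hypothesis x_notin : forall i, P i -> x != a i.

Let Q s := \prod_(i <- s | P i) ('X - (a i)%:P).
Let s1 s := \sum_(i <- s | P i) (x - a i)^-1.
Let s2 s := \sum_(i <- s | P i) (x - a i)^-2.

Lemma horner_deriv_prod_XsubC s : (Q s)^`().[x] = (Q s).[x] * s1 s.
Proof.
elim: s => [|i s IH]; first by rewrite /Q /s1 !big_nil derivC !hornerE.
move: IH; rewrite /Q /s1 !big_cons; case: ifP => Pi // IH.
have xi : x - a i != 0 by rewrite subr_eq0 x_notin.
by rewrite !derivE !hornerE IH; field.
Qed.

Lemma horner_deriv2_prod_XsubC s : (Q s)^`()^`().[x] = (Q s).[x] * (s1 s ^+ 2 - s2 s).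
Proof.
elim: s => [|i s IH].
  by rewrite /Q /s1 /s2 !big_nil !derivC !hornerE expr2 mulr0 subrr.
move: IH (horner_deriv_prod_XsubC s); rewrite /Q /s1 /s2 !big_cons.
case: ifP => Pi // IH D1.
have xi : x - a i != 0 by rewrite subr_eq0 x_notin.
by rewrite !derivE !hornerE IH D1 /=; field.
Qed.

End DerivProdXsubC.

Section NodalMatrix.
Context {F : fieldType} {N : nat} (y : 'I_N -> F).
Hypothesis y_inj : injective y.

Definition node_poly (j : 'I_N) : {poly F} := \prod_(l < N | l != j) ('X - (y l)%:P).

Definition nodal_mx (T : {poly F} -> {poly F}) : 'M[F]_N :=
  \matrix_(i, j) ((T (node_poly j)).[y i] / (node_poly j).[y j]).

Lemma node_poly_root {i j} : i != j -> (node_poly j).[y i] = 0.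
Proof. by move=> ij; rewrite horner_prod (bigD1 i) //= hornerXsubC subrr mul0r. Qed.

Lemma node_poly_neq0 j : (node_poly j).[y j] != 0.
Proof.
rewrite horner_prod; apply/prodf_neq0 => l lj.
by rewrite hornerXsubC subr_eq0 (inj_eq y_inj) eq_sym.
Qed.

Lemma size_node_poly j : (size (node_poly j) <= N)%N.
Proof.
rewrite /node_poly -big_filter size_prod_XsubC size_filter -sum1_count sum1_card.
by rewrite cardC1 card_ord prednK // (leq_ltn_trans _ (ltn_ord j)).
Qed.

Lemma prod_XsubC_node_poly j :
  \prod_(l < N) ('X - (y l)%:P) = ('X - (y j)%:P) * node_poly j.
Proof. exact: bigD1. Qed.

Lemma horner_deriv_node_poly {i j} : i != j ->
  (y i - y j) * (node_poly j)^`().[y i] = (node_poly i).[y i].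
Proof.
move=> ij; have := congr1 (fun p => p^`().[y i])
  (etrans (esym (prod_XsubC_node_poly i)) (prod_XsubC_node_poly j)).
rewrite /= !derivM !derivXsubC !hornerE subrr (node_poly_root ij).
by rewrite mul0r addr0 add0r.
Qed.

Lemma lagrange_interpolation (f : {poly F}) : (size f <= N)%N ->
  f = \sum_j (f.[y j] / (node_poly j).[y j]) *: node_poly j.
Proof.
move=> sf; apply/eqP; rewrite -subr_eq0; apply/eqP.
apply: (@roots_geq_poly_eq0 _ _ [seq y i | i <- enum 'I_N]).
- apply/allP => _ /mapP [i _ ->].
  rewrite rootE hornerD hornerN horner_sum (bigD1 i) //= big1 => [|j ji]; last first.
    by rewrite hornerZ (@node_poly_root i j) ?mulr0 // eq_sym.
  by rewrite hornerZ addr0 divfK ?subrr ?node_poly_neq0.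
- by rewrite map_inj_uniq ?enum_uniq.
- rewrite size_map size_enum_ord (leq_trans (size_polyD _ _)) // size_polyN.
  rewrite geq_max sf (leq_trans (size_sum _ _ _)) //.
  by apply/bigmax_leqP => j _; rewrite (leq_trans (size_scale_leq _ _)) ?size_node_poly.
Qed.

Lemma det_nodal_mx (T : {linear {poly F} -> {poly F}}) :
    (forall k, (k < N)%N -> (size (T 'X^k) <= N)%N) ->
  \det (nodal_mx T) = \det (monomial_mx N T).
Proof.
move=> sizeT.
pose V : 'M[F]_N := \matrix_(i, k) (y i ^+ k).
have detV_neq0 : \det V != 0.
  have -> : V = (Vandermonde N (\row_i y i))^T by apply/matrixP => i k; rewrite !mxE.
  rewrite det_tr det_Vandermonde; apply/prodf_neq0 => i _; apply/prodf_neq0 => j ij.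
  by rewrite !mxE subr_eq0 (inj_eq y_inj); apply: contraTneq ij => ->; rewrite ltnn.
have AV : nodal_mx T *m V = V *m monomial_mx N T.
  apply/matrixP => i k; rewrite !mxE.
  transitivity (T 'X^k).[y i]; last first.
    rewrite (horner_coef_wide _ (sizeT k (ltn_ord k))).
    by apply: eq_bigr => m _; rewrite !mxE mulrC.
  have sXk : (size ('X^k : {poly F}) <= N)%N by rewrite size_polyXn.
  rewrite [X in T X](lagrange_interpolation _ sXk).
  rewrite linear_sum horner_sum; apply: eq_bigr => j _.
  by rewrite linearZ hornerZ !mxE hornerXn mulrC mulrA mulrAC.
by apply: (mulIf detV_neq0); rewrite -det_mulmx AV det_mulmx mulrC.
Qed.

End NodalMatrix.

Section LaguerrePolynomial.
Context {R : numFieldType}.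

Lemma size_laguerre (a : R) N : size (laguerre a N) = N.+1.
Proof.
rewrite size_poly_eq // subnn big_geq // mulr1 mulf_neq0 ?signr_eq0 //.
by rewrite invr_neq0 // mulf_neq0 // pnatr_eq0 -lt0n fact_gt0.
Qed.

Lemma coef_laguerreS (a : R) {N k} : (k < N)%N ->
  (laguerre a N)`_k.+1 * (k.+1%:R * (k%:R + a + 1)) = - (laguerre a N)`_k * (N%:R - k%:R).
Proof.
move=> kN; have [m ->] : exists m, N = (k + m).+1 by exists (N - k.+1)%N; rewrite -addSn subnKC.
rewrite !coef_poly !ltnS leq_addr ltnW ?leq_addr // (big_ltn (m := k.+1)) ?ltnS ?leq_addr //.
have -> : ((k + m).+1 - k = m.+1)%N by rewrite -addnS addKn.
rewrite subSS addKn !factS !natrM exprS -!natr1 natrD.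
have fact_neq0 n : n`!%:R != 0 :> R by rewrite pnatr_eq0 -lt0n fact_gt0.
have natS_neq0 n : n%:R + 1 != 0 :> R by rewrite natr1 pnatr_eq0.
field; by rewrite !fact_neq0 !natS_neq0.
Qed.

Lemma laguerre_op_laguerre (nu : R) N : laguerre_op nu N (laguerre (nu - 1) N) = 0.
Proof.
apply/polyP => k; rewrite coef_laguerre_op coef0.
have [kN|Nk] := ltnP k N.
  have := coef_laguerreS (nu - 1) kN; rewrite -addrA subrK => ->.
  by rewrite mulNr addNr.
rewrite [_`_k.+1]nth_default ?size_laguerre // mul0r add0r.
have [->|] := eqVneq k N; first by rewrite subrr mulr0.
by move=> kN; rewrite nth_default ?mul0r // size_laguerre ltn_neqAle eq_sym kN.
Qed.

End LaguerrePolynomial.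

Section LaguerreZeros.
Context {R : numFieldType} {N : nat} {nu : R} {y : 'I_N -> R}.
Hypotheses (y_inj : injective y) (y_root : forall i, root (laguerre (nu - 1) N) (y i)).

Local Notation Q := (node_poly y).
Local Notation L := (laguerre_op nu N).

Lemma laguerre_op_prod_XsubC : L (\prod_(l < N) ('X - (y l)%:P)) = 0.
Proof.
set ys := [seq y l | l <- index_enum 'I_N].
have ys_roots : all (root (laguerre (nu - 1) N)) ys by apply/allP => _ /mapP [i _ ->].
have ys_uniq : uniq_roots ys by rewrite uniq_rootsE map_inj_uniq ?index_enum_uniq.
have [q lag_q] := uniq_roots_prod_XsubC ys_roots ys_uniq.
rewrite big_map in lag_q.
have size_prod : size (\prod_(l < N) ('X - (y l)%:P)) = N.+1.
  by rewrite size_prod_XsubC [index_enum _]unlock -enumT size_enum_ord.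
have lag_neq0 : laguerre (nu - 1) N != 0 by rewrite -size_poly_eq0 size_laguerre.
have /size_poly1P [c c0 qc] : size q == 1%N.
  move: (size_laguerre (nu - 1) N); rewrite lag_q size_Mmonic ?monic_prod_XsubC //.
    by rewrite size_prod addnS /= -add1n => /eqP; rewrite eqn_add2r.
  by apply: contra lag_neq0; rewrite lag_q => /eqP ->; rewrite mul0r.
have := laguerre_op_laguerre nu N; rewrite lag_q qc mul_polyC linearZ /=.
by move/eqP; rewrite scaler_eq0 (negPf c0) => /eqP.
Qed.

Lemma laguerre_op_node_poly j :
  ('X - (y j)%:P) * L (Q j) + 'X *+ 2 * (Q j)^`() + (nu%:P - 'X) * Q j = 0.
Proof. by rewrite -laguerre_op_mulXsubC -prod_XsubC_node_poly laguerre_op_prod_XsubC. Qed.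

Let y_neq i l : l != i -> y i != y l.
Proof. by rewrite eq_sym (inj_eq y_inj). Qed.

Lemma stieltjes_relation i : 2 * y i * \sum_(l < N | l != i) (y i - y l)^-1 = y i - nu.
Proof.
have := congr1 (horner^~ (y i)) (laguerre_op_node_poly i).
rewrite /= !hornerE subrr mul0r add0r (horner_deriv_prod_XsubC _ _ _ (y_neq i)).
move=> e; apply: (mulfI (node_poly_neq0 _ y_inj i)).
by rewrite -[RHS]addr0 -[X in _ + X]e /node_poly; ring.
Qed.

Lemma nodal_mx_laguerre_op_offdiag i j : i != j ->
  nodal_mx y L i j = - (2 * y i * (Q i).[y i]) / ((y i - y j) ^+ 2 * (Q j).[y j]).
Proof.
move=> ij; rewrite mxE; have := laguerre_op_node_poly j.
move: (L (Q j)) => LQ /(congr1 (horner^~ (y i))).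
rewrite /= !hornerE (node_poly_root y ij) mulr0 addr0 => /eqP.
rewrite addr_eq0 => /eqP e.
have yij : y i - y j != 0 by rewrite subr_eq0 y_neq // eq_sym.
rewrite -(horner_deriv_node_poly y ij); apply: (mulfI yij).
by rewrite mulrA e; field; rewrite yij node_poly_neq0.
Qed.

Lemma nodal_mx_laguerre_op_diag i : y i != 0 ->
  nodal_mx y L i i = nu / y i + 2 * y i * \sum_(l < N | l != i) (y i - y l) ^- 2.
Proof.
move=> yi0; rewrite mxE; have := laguerre_op_node_poly i.
move: (L (Q i)) => LQ /(congr1 (fun p => p^`().[y i])).
rewrite /= !derivE !hornerE subrr.
rewrite (horner_deriv_prod_XsubC _ _ _ (y_neq i)) (horner_deriv2_prod_XsubC _ _ _ (y_neq i)).
move=> e; have q0 := node_poly_neq0 _ y_inj i.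
apply: (mulIf q0); rewrite divfK // -[LHS]subr0 -[X in _ - X = _]e.
have -> : nu = y i - 2 * y i * \sum_(l < N | l != i) (y i - y l)^-1.
  by rewrite stieltjes_relation opprB addrC subrK.
by rewrite /node_poly /=; field; rewrite yi0.
Qed.

End LaguerreZeros.

Section InverseSquares.
Context {F : fieldType} (a b : F).
Hypothesis ab : a ^+ 2 != b ^+ 2.

Let add_sub_neq0 : (a + b != 0) && (a - b != 0).
Proof. by rewrite -negb_or -mulf_eq0 mulrC -subr_sqr subr_eq0. Qed.

Lemma inv_sqr_sub_add : (a - b) ^- 2 + (a + b) ^- 2 = 2 * (a ^+ 2 + b ^+ 2) / (a ^+ 2 - b ^+ 2) ^+ 2.
Proof. by rewrite subr_sqr; field; exact: add_sub_neq0. Qed.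

Lemma inv_sqr_add_sub : (a + b) ^- 2 - (a - b) ^- 2 = - (4 * a * b) / (a ^+ 2 - b ^+ 2) ^+ 2.
Proof. by rewrite subr_sqr; field; exact: add_sub_neq0. Qed.

End InverseSquares.

Lemma det_diag_similar {F : fieldType} {n : nat} {S A : 'M[F]_n} {c : F} {d : 'I_n -> F} :
    (forall i, d i != 0) -> (forall i j, d i * S i j = c * A i j * d j) ->
  \det S = c ^+ n * \det A.
Proof.
move=> d_neq0 dS; pose D := diag_mx (\row_i d i).
have DS : D *m S = (c *: A) *m D.
  by apply/matrixP => i j; rewrite mul_diag_mx mul_mx_diag !mxE dS.
have D_neq0 : \det D != 0 by rewrite det_diag; apply/prodf_neq0 => i _; rewrite mxE.
by apply: (mulIf D_neq0); rewrite mulrC -det_mulmx DS det_mulmx detZ.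
Qed.

Section LaguerreSmat.
Context {R : realType} {N : nat} {nu : R} {y : 'I_N -> R}.
Hypotheses (y_inj : injective y) (y_pos : forall i, 0 < y i)
  (y_root : forall i, root (laguerre (nu - 1) N) (y i)).

Local Notation r i := (Num.sqrt (2 * y i)).
Local Notation q i := ((node_poly y i).[y i]).
Local Notation L := (laguerre_op nu N).
Local Notation S := (Smat nu (fun i => r i)).

Let r_sqr i : r i ^+ 2 = 2 * y i.
Proof. by rewrite sqr_sqrtr // ltW // mulr_gt0 ?y_pos. Qed.

Let r_sqr_neq i j : i != j -> r i ^+ 2 != r j ^+ 2.
Proof. by rewrite !r_sqr (inj_eq (mulfI _)) ?pnatr_eq0 // (inj_eq y_inj). Qed.

Lemma Smat_diag i : S i i = 2 * nodal_mx y L i i.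
Proof.
have yi0 : y i != 0 by rewrite gt_eqF ?y_pos.
have sum_eq : \sum_(l < N | l != i) ((r i - r l) ^- 2 + (r i + r l) ^- 2) =
    2 * y i * \sum_(l < N | l != i) (y i - y l) ^- 2 - \sum_(l < N | l != i) (y i - y l)^-1.
  rewrite mulr_sumr -sumrB; apply: eq_bigr => l li.
  have yil : y i - y l != 0 by rewrite subr_eq0 (inj_eq y_inj) eq_sym.
  rewrite inv_sqr_sub_add ?r_sqr_neq 1?eq_sym // !r_sqr; field.
  by rewrite -mulrBr mulf_eq0 negb_or pnatr_eq0 yil.
rewrite mxE eqxx -addrA -mulrDr -big_split /= sum_eq r_sqr.
rewrite (nodal_mx_laguerre_op_diag y_inj y_root) //.
have -> : nu = y i - 2 * y i * \sum_(l < N | l != i) (y i - y l)^-1.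
  by rewrite (stieltjes_relation y_inj y_root) opprB addrC subrK.
by field; rewrite yi0.
Qed.

Lemma Smat_offdiag i j : i != j ->
  S i j = - (2 * r i * r j) / (y i - y j) ^+ 2.
Proof.
move=> ij; have yij : y i - y j != 0 by rewrite subr_eq0 (inj_eq y_inj).
rewrite mxE (negPf ij) -mulrBr inv_sqr_add_sub ?r_sqr_neq // !r_sqr.
by field; rewrite -mulrBr mulf_eq0 negb_or pnatr_eq0 yij.
Qed.

Lemma Smat_nodal_conj i j :
  r i * q i * S i j = 2 * nodal_mx y L i j * (r j * q j).
Proof.
have [<-|ij] := eqVneq i j; first by rewrite Smat_diag mulrC.
have yij : y i - y j != 0 by rewrite subr_eq0 (inj_eq y_inj).
rewrite Smat_offdiag // (nodal_mx_laguerre_op_offdiag y_inj y_root) //.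
(* expose [r i ^+ 2] so that [r_sqr] can replace it by [2 * y i] *)
transitivity (- (2 * r i ^+ 2 * q i * r j) / (y i - y j) ^+ 2); first by field.
by rewrite r_sqr; field; rewrite yij (node_poly_neq0 _ y_inj).
Qed.

Lemma det_Smat_laguerre : \det S = N`!%:R * 2 ^+ N.
Proof.
have d_neq0 i : r i * q i != 0.
  by rewrite mulf_neq0 ?(node_poly_neq0 _ y_inj) // gt_eqF // sqrtr_gt0 mulr_gt0 ?y_pos.
rewrite (det_diag_similar d_neq0 Smat_nodal_conj) (det_nodal_mx _ y_inj).
  by rewrite det_monomial_mx_laguerre_op mulrC.
by move=> k kN; rewrite size_laguerre_op // size_polyXn.
Qed.

End LaguerreSmat.

Theorem corollary3p4 (R : realType) (N : nat) (nu : R) (z : 'I_N -> R) :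
  0 < nu ->
  (forall i j : 'I_N, (i < j)%N -> z j < z i) ->
  (forall i, 0 < z i) ->
  (forall i, root (laguerre (nu - 1) N) (z i)) ->
  \det (Smat nu (fun i => Num.sqrt (2 * z i))) = (N`!)%:R * 2 ^+ N.
Proof.
move=> _ z_decr z_pos z_root.
have z_inj : injective z.
  move=> i j zij; case: (ltngtP i j) => [/z_decr|/z_decr|/val_inj //];
  by rewrite zij ltxx.
exact: det_Smat_laguerre z_inj z_pos z_root.
Qed.
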